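(* Let $S=G_2(q)$, where $q=3^f$ and $f>1$, and let $\phi$ be a field automorphism of $S$ of prime order. Let $r$ be a Zsigmondy prime divisor of $\Phi_2(q)=q+1$, i.e. a prime with the multiplicative order of $3$ modulo $r$ equal to $2f$, and let $R$ be a Sylow $r$-subgroup of $S$. Then $C_{\widehat{A}_0}(R)\le S$.
   Context: $\widehat{A}_0$ denotes the subgroup of $\mathrm{Aut}(S)$ generated by $S$ (identified with $\mathrm{Inn}(S)$) and all field automorphisms of $S$. *)

From HB Require Import structures.
From mathcomp Require Import all_boot all_order all_algebra all_fingroup all_solvable.
Set Implicit Arguments. Unset Strict Implicit. Unset Printing Implicit Defensive.
Import GRing.Theory.
Local Open Scope ring_scope.

(* G_2(q) realised as the automorphism group of the (split) octonion algebra
   over a finite field F, acting on F^8 = 'rV[F]_8.  Basis e_0 (=1), e_1..e_7,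
   e_i e_j = +- e_(i xor j) with the standard Fano-plane sign table, all
   structure constants in {0,1,-1}. *)

(* ordered pairs (i,j), i<>j in 1..7, with e_i e_j = + e_(i xor j):
   cyclic rotations of (1,2,3),(1,4,5),(1,7,6),(2,4,6),(2,5,7),(3,4,7),(3,6,5) *)
Definition oct_pos_pairs : seq (nat * nat) :=
  [:: (1,2); (2,3); (3,1); (1,4); (4,5); (5,1); (1,7); (7,6); (6,1);
      (2,4); (4,6); (6,2); (2,5); (5,7); (7,2); (3,4); (4,7); (7,3);
      (3,6); (6,5); (5,3)]%N.

Section Octonions.
Variable F : fieldType.

Definition oct_coef (i j k : 'I_8) : F :=
  if (k : nat) == Nat.lxor i j then
    if (i == 0 :> nat) || (j == 0 :> nat) then 1
    else if i == j then -1
    else if ((i : nat), (j : nat)) \in oct_pos_pairs then 1 else -1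
  else 0.

Definition omul (x y : 'rV[F]_8) : 'rV[F]_8 :=
  \row_k \sum_(i < 8) \sum_(j < 8) oct_coef i j k * x 0 i * y 0 j.
End Octonions.

Section G2.
Variable F : finFieldType.

Definition G2 : {set {perm 'rV[F]_8}} :=
  [set g : {perm 'rV[F]_8} |
     [forall a : F, forall x : 'rV[F]_8, forall y : 'rV[F]_8,
        g (a *: x + y) == a *: g x + g y]
  && [forall x : 'rV[F]_8, forall y : 'rV[F]_8,
        g (omul x y) == omul (g x) (g y)]].

(* the coordinatewise Frobenius a |-> a^3 (a singleton set in characteristic 3);
   conjugation by its powers induces the field automorphisms of G_2(F) *)
Definition FrobSet : {set {perm 'rV[F]_8}} :=
  [set g : {perm 'rV[F]_8} |
     [forall x : 'rV[F]_8, g x == map_mx (fun a : F => a ^+ 3) x]].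

Definition A0hat : {set {perm 'rV[F]_8}} := <<G2 :|: FrobSet>>%g.

Definition FieldAuts : {set {perm 'rV[F]_8}} := <<FrobSet>>%g.
End G2.

Definition zsigmondy_3_2f (f r : nat) : Prop :=
  prime r /\ 3 ^ (2 * f) = 1 %[mod r] /\
  (forall m, 0 < m < 2 * f -> 3 ^ m <> 1 %[mod r])%N.

From HB Require Import structures.
From mathcomp Require Import all_boot all_order all_algebra all_fingroup all_solvable.
From mathcomp Require Import finfield ring.

(* Every element of \hat A_0 has the form g Frob^k with g in S and Frob the
   coordinatewise map a |-> a^3.  As r divides q + 1, GL_2(q) contains an
   element of order r, and a power M of it lies in SL_2(q).  Since
   -1 = 1^2 + 1^2 in characteristic 3, M_2(F) is a quaternion algebra, whose
   norm-one group SL_2(q) acts on the octonions O = H + H l through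
   a + b l |-> a + (p b) l; so M yields an element t of S of order r with
   trace 4 + 2 tr M.  If g Frob^k centralises t, then the matrix of t is
   conjugate to its Frobenius twist, hence (tr M)^(3^k) = tr M.  By
   Cayley-Hamilton and the Frobenius in F[X], M^(3^k - 1) = 1 or
   M^(3^k + 1) = 1, so r divides 3^(2k) - 1, which a Zsigmondy prime forbids
   unless k = 0 mod f.  Finally, every Sylow r-subgroup of S contains a
   conjugate of t. *)

Set Implicit Arguments.
Unset Strict Implicit.
Unset Printing Implicit Defensive.

Import GRing.Theory.
Local Open Scope ring_scope.

Local Notation "x '@@' i" := (x 0 (@Ordinal 8 i isT)) (at level 10, format "x @@ i").

Lemma big_ord8 (R : nmodType) (G : 'I_8 -> R) : \sum_(i < 8) G i =
  G (@Ordinal 8 0 isT) + G (@Ordinal 8 1 isT) + G (@Ordinal 8 2 isT) + G (@Ordinal 8 3 isT) +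
  G (@Ordinal 8 4 isT) + G (@Ordinal 8 5 isT) + G (@Ordinal 8 6 isT) + G (@Ordinal 8 7 isT).
Proof.
rewrite !big_ord_recl big_ord0 addr0 !addrA.
by repeat congr (_ + _); congr G; apply: val_inj.
Qed.

Lemma ord8P (P : 'I_8 -> Prop) :
  P (@Ordinal 8 0 isT) -> P (@Ordinal 8 1 isT) -> P (@Ordinal 8 2 isT) -> P (@Ordinal 8 3 isT) ->
  P (@Ordinal 8 4 isT) -> P (@Ordinal 8 5 isT) -> P (@Ordinal 8 6 isT) -> P (@Ordinal 8 7 isT) ->
  forall i, P i.
Proof.
move=> P0 P1 P2 P3 P4 P5 P6 P7 [m lt_m8].
do 8 (case: m lt_m8 => [|m] lt_m8; first by rewrite (bool_irrelevance lt_m8 isT)).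
by exfalso; move: lt_m8; rewrite !ltnS ltn0.
Qed.

Lemma big_ord2 (R : nmodType) (G : 'I_2 -> R) : \sum_(i < 2) G i = G 0 + G 1.
Proof. by rewrite !big_ord_recl big_ord0 addr0; congr (G _ + G _); apply: val_inj. Qed.

(** * Octonions and quaternions *)

Section OctonionTable.
Variable F : fieldType.
Implicit Types x y : 'rV[F]_8.

Lemma omul_0 x y : (omul x y)@@0 = x@@0 * y@@0 - x@@1 * y@@1 - x@@2 * y@@2 - x@@3 * y@@3
  - x@@4 * y@@4 - x@@5 * y@@5 - x@@6 * y@@6 - x@@7 * y@@7.
Proof. by rewrite mxE !big_ord8 /oct_coef /=; ring. Qed.

Lemma omul_1 x y : (omul x y)@@1 = x@@0 * y@@1 + x@@1 * y@@0 + x@@2 * y@@3 - x@@3 * y@@2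
  + x@@4 * y@@5 - x@@5 * y@@4 - x@@6 * y@@7 + x@@7 * y@@6.
Proof. by rewrite mxE !big_ord8 /oct_coef /=; ring. Qed.

Lemma omul_2 x y : (omul x y)@@2 = x@@0 * y@@2 - x@@1 * y@@3 + x@@2 * y@@0 + x@@3 * y@@1
  + x@@4 * y@@6 + x@@5 * y@@7 - x@@6 * y@@4 - x@@7 * y@@5.
Proof. by rewrite mxE !big_ord8 /oct_coef /=; ring. Qed.

Lemma omul_3 x y : (omul x y)@@3 = x@@0 * y@@3 + x@@1 * y@@2 - x@@2 * y@@1 + x@@3 * y@@0
  + x@@4 * y@@7 - x@@5 * y@@6 + x@@6 * y@@5 - x@@7 * y@@4.
Proof. by rewrite mxE !big_ord8 /oct_coef /=; ring. Qed.

Lemma omul_4 x y : (omul x y)@@4 = x@@0 * y@@4 - x@@1 * y@@5 - x@@2 * y@@6 - x@@3 * y@@7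
  + x@@4 * y@@0 + x@@5 * y@@1 + x@@6 * y@@2 + x@@7 * y@@3.
Proof. by rewrite mxE !big_ord8 /oct_coef /=; ring. Qed.

Lemma omul_5 x y : (omul x y)@@5 = x@@0 * y@@5 + x@@1 * y@@4 - x@@2 * y@@7 + x@@3 * y@@6
  - x@@4 * y@@1 + x@@5 * y@@0 - x@@6 * y@@3 + x@@7 * y@@2.
Proof. by rewrite mxE !big_ord8 /oct_coef /=; ring. Qed.

Lemma omul_6 x y : (omul x y)@@6 = x@@0 * y@@6 + x@@1 * y@@7 + x@@2 * y@@4 - x@@3 * y@@5
  - x@@4 * y@@2 + x@@5 * y@@3 + x@@6 * y@@0 - x@@7 * y@@1.
Proof. by rewrite mxE !big_ord8 /oct_coef /=; ring. Qed.

Lemma omul_7 x y : (omul x y)@@7 = x@@0 * y@@7 - x@@1 * y@@6 + x@@2 * y@@5 + x@@3 * y@@4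
  - x@@4 * y@@3 - x@@5 * y@@2 + x@@6 * y@@1 + x@@7 * y@@0.
Proof. by rewrite mxE !big_ord8 /oct_coef /=; ring. Qed.

Lemma omul_map_mx (K : fieldType) (sigma : {rmorphism F -> K}) x y :
  map_mx sigma (omul x y) = omul (map_mx sigma x) (map_mx sigma y).
Proof.
have sigma_coef i j k : sigma (oct_coef F i j k) = oct_coef K i j k.
  by rewrite /oct_coef; repeat case: ifP => _; rewrite ?rmorph0 ?rmorph1 ?rmorphN1.
apply/rowP => k; rewrite !mxE rmorph_sum; apply: eq_bigr => i _.
by rewrite rmorph_sum; apply: eq_bigr => j _; rewrite !rmorphM sigma_coef !mxE.
Qed.

End OctonionTable.

Section Quaternions.
Variable F : fieldType.

Record quat := Quat { qre : F; qi : F; qj : F; qk : F }.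

Implicit Types (p q : quat) (x y : 'rV[F]_8).

Definition qmul p q : quat :=
  Quat (qre p * qre q - qi p * qi q - qj p * qj q - qk p * qk q)
       (qre p * qi q + qi p * qre q + qj p * qk q - qk p * qj q)
       (qre p * qj q - qi p * qk q + qj p * qre q + qk p * qi q)
       (qre p * qk q + qi p * qj q - qj p * qi q + qk p * qre q).

Definition qnorm p : F := qre p ^+ 2 + qi p ^+ 2 + qj p ^+ 2 + qk p ^+ 2.

(* With l = e_4 we have e_(4+i) = e_i l, so O = H + H l; this is the matrix,
   acting on row vectors, of a + b l |-> a + (p b) l. *)
Definition qaut_coef p (i j : nat) : F :=
  let: Quat p0 p1 p2 p3 := p in
  match i, j with
  | 0%N, 0%N | 1%N, 1%N | 2%N, 2%N | 3%N, 3%N => 1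
  | 4%N, 4%N => p0 | 4%N, 5%N => p1 | 4%N, 6%N => p2 | 4%N, 7%N => p3
  | 5%N, 4%N => -p1 | 5%N, 5%N => p0 | 5%N, 6%N => p3 | 5%N, 7%N => -p2
  | 6%N, 4%N => -p2 | 6%N, 5%N => -p3 | 6%N, 6%N => p0 | 6%N, 7%N => p1
  | 7%N, 4%N => -p3 | 7%N, 5%N => p2 | 7%N, 6%N => -p1 | 7%N, 7%N => p0
  | _, _ => 0
  end.

Definition qaut_mx p : 'M[F]_8 := \matrix_(i, j) qaut_coef p i j.

Definition oct_lpart x : 'rV[F]_8 := \row_i (if (4 <= i)%N then x 0 i else 0).

Lemma qaut_mxE p i j : qaut_mx p i j = qaut_coef p i j.
Proof. by rewrite mxE. Qed.

Lemma row_mul_qaut p x j : (x *m qaut_mx p) 0 j =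
  x@@0 * qaut_coef p 0 j + x@@1 * qaut_coef p 1 j + x@@2 * qaut_coef p 2 j + x@@3 * qaut_coef p 3 j +
  x@@4 * qaut_coef p 4 j + x@@5 * qaut_coef p 5 j + x@@6 * qaut_coef p 6 j + x@@7 * qaut_coef p 7 j.
Proof. by rewrite mxE big_ord8 !qaut_mxE. Qed.

Lemma oct_lpartE x i : oct_lpart x 0 i = if (4 <= i)%N then x 0 i else 0.
Proof. by rewrite mxE. Qed.

Lemma qaut_omulE p x y :
  omul (x *m qaut_mx p) (y *m qaut_mx p) =
  omul x y *m qaut_mx p + (qnorm p - 1) *: omul (oct_lpart x) (oct_lpart y).
Proof.
case: p => p0 p1 p2 p3; apply/rowP; apply: ord8P;
  rewrite [in RHS]mxE [X in _ + X]mxE row_mul_qaut !omul_0 !omul_1 !omul_2 !omul_3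
    !omul_4 !omul_5 !omul_6 !omul_7 !row_mul_qaut !oct_lpartE /qnorm /=;
  ring.
Qed.

Lemma qaut_omul p x y : qnorm p = 1 ->
  omul (x *m qaut_mx p) (y *m qaut_mx p) = omul x y *m qaut_mx p.
Proof. by move=> norm_p; rewrite qaut_omulE norm_p subrr scale0r addr0. Qed.

Lemma qaut_mxM p q : qaut_mx p *m qaut_mx q = qaut_mx (qmul q p).
Proof.
case: p q => [p0 p1 p2 p3] [q0 q1 q2 q3].
by apply/matrixP; apply: ord8P; apply: ord8P; rewrite mxE big_ord8 !qaut_mxE /=; ring.
Qed.

Lemma qaut_mx1 : qaut_mx (Quat 1 0 0 0) = 1%:M.
Proof. by apply/matrixP; apply: ord8P; apply: ord8P; rewrite qaut_mxE mxE /= ?oppr0. Qed.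

Lemma mxtrace_qaut p : \tr (qaut_mx p) = 4%:R * (1 + qre p).
Proof. by case: p => p0 p1 p2 p3; rewrite /mxtrace big_ord8 !qaut_mxE /=; ring. Qed.

End Quaternions.

(** * Two by two matrices and split quaternions *)

Lemma det_mx22 (R : comNzRingType) (A : 'M[R]_2) : \det A = A 0 0 * A 1 1 - A 0 1 * A 1 0.
Proof.
rewrite (expand_det_row _ 0) big_ord2 /cofactor !det_mx11 !mxE.
rewrite (_ : lift 0 0 = 1); last exact: val_inj.
rewrite (_ : lift 1 0 = 0); last exact: val_inj.
by rewrite /= expr0 expr1 mul1r mulN1r mulrN.
Qed.

Lemma mxtrace_mx22 (R : comNzRingType) (A : 'M[R]_2) : \tr A = A 0 0 + A 1 1.
Proof. by rewrite /mxtrace big_ord2. Qed.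

Section Matrix22.
Variable R : comNzRingType.
Implicit Type A : 'M[R]_2.

Lemma char_poly_mx22 A : char_poly A = 'X^2 - (\tr A)%:P * 'X + (\det A)%:P.
Proof.
rewrite /char_poly !det_mx22 mxtrace_mx22 !mxE /= !(polyCD, polyCB, polyCM, polyCN).
ring.
Qed.

Lemma Cayley_Hamilton_mx22 A : horner_mx A ('X^2 - (\tr A)%:P * 'X + (\det A)%:P) = 0.
Proof. by rewrite -char_poly_mx22 Cayley_Hamilton. Qed.

Lemma det_add1mx22 A : \det (1 + A) = 1 + \tr A + \det A.
Proof. by rewrite !det_mx22 mxtrace_mx22 !mxE /=; ring. Qed.

End Matrix22.

Lemma detX (R : comNzRingType) n (A : 'M[R]_n.+1) m : \det (A ^+ m) = \det A ^+ m.
Proof. by elim: m => [|m IHm]; rewrite ?det1 // !exprS -mulmxE det_mulmx IHm. Qed.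

Lemma unipotent_mx22_eq1 (F : fieldType) (X : 'M[F]_2) r :
  \det X = 1 -> \det (X - 1) = 0 -> X ^+ r = 1 -> r%:R != 0 :> F -> X = 1.
Proof.
move=> detX1 detY Xr r_neq0.
have [Y X_1Y] : exists Y, X = 1 + Y by exists (X - 1); rewrite addrC subrK.
rewrite X_1Y addrAC subrr add0r in detY.
have trY : \tr Y = 0.
  by apply: (addrI 1); rewrite addr0 -{2}detX1 X_1Y det_add1mx22 detY addr0.
have Y2 : Y ^+ 2 = 0.
  have := Cayley_Hamilton_mx22 Y.
  by rewrite trY detY !raddf0 mul0r subr0 addr0 rmorphXn /= horner_mx_X.
have XnE n : X ^+ n = 1 + Y *+ n.
  elim: n => [|n IHn]; first by rewrite expr0 mulr0n addr0.
  rewrite exprSr IHn X_1Y mulrDr mulr1 mulrDl mul1r mulrnAl -expr2 Y2 mul0rn addr0.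
  by rewrite mulrSr addrA.
have : Y *+ r = 0 by apply: (addrI 1); rewrite -XnE Xr addr0.
rewrite -scaler_nat => /eqP; rewrite scaler_eq0 (negbTE r_neq0) /= => /eqP Y0.
by rewrite X_1Y Y0 addr0.
Qed.

Section SplitQuaternions.
Variables (F : fieldType) (s t : F).
Hypotheses (sqr_st : s ^+ 2 = - 1 - t ^+ 2) (two_neq0 : 2%:R != 0 :> F).

(* The coordinates of M in the basis 1, [[-s, -t], [-t, s]], [[-t, s], [s, t]],
   [[0, 1], [-1, 0]] of M_2(F), which multiplies like 1, i, j, k since
   s^2 + t^2 = -1. *)
Definition mx2_quat (M : 'M[F]_2) : quat F :=
  Quat ((M 0 0 + M 1 1) / 2%:R) ((s * (M 0 0 - M 1 1) + t * (M 0 1 + M 1 0)) / 2%:R)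
       ((t * (M 0 0 - M 1 1) - s * (M 0 1 + M 1 0)) / 2%:R) ((M 0 1 - M 1 0) / 2%:R).

Lemma mx2_quatM (M N : 'M[F]_2) : mx2_quat (M *m N) = qmul (mx2_quat M) (mx2_quat N).
Proof. by rewrite /mx2_quat /qmul !mxE !big_ord2 /=; congr Quat; field: sqr_st. Qed.

Lemma mx2_quat1 : mx2_quat 1%:M = Quat 1 0 0 0.
Proof. by rewrite /mx2_quat !mxE /=; congr Quat; field. Qed.

Lemma qnorm_mx2_quat (M : 'M[F]_2) : qnorm (mx2_quat M) = \det M.
Proof. by rewrite det_mx22 /qnorm /=; field: sqr_st. Qed.

Definition mx2_aut (M : 'M[F]_2) : 'M[F]_8 := qaut_mx (mx2_quat M).

Lemma mxtrace_mx2_aut (M : 'M[F]_2) : \tr (mx2_aut M) = 4%:R + 2%:R * \tr M.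
Proof. by rewrite mxtrace_qaut mxtrace_mx22 /=; field. Qed.

Lemma mx2_autM (M N : 'M[F]_2) : mx2_aut M *m mx2_aut N = mx2_aut (N *m M).
Proof. by rewrite /mx2_aut qaut_mxM mx2_quatM. Qed.

Lemma mx2_aut1 : mx2_aut 1%:M = 1%:M.
Proof. by rewrite /mx2_aut mx2_quat1 qaut_mx1. Qed.

Lemma mx2_autX (M : 'M[F]_2) n : mx2_aut M ^+ n = mx2_aut (M ^+ n).
Proof.
elim: n => [|n IHn]; first by rewrite !expr0 mx2_aut1.
by rewrite exprS IHn -mulmxE mx2_autM mulmxE -exprSr.
Qed.

Lemma mx2_aut_unitmx (M : 'M[F]_2) : M \in unitmx -> mx2_aut M \in unitmx.
Proof.
move=> M_unit; have [] // := @mulmx1_unit _ _ (mx2_aut M) (mx2_aut (invmx M)).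
by rewrite mx2_autM mulVmx // mx2_aut1.
Qed.

Lemma mx2_aut_omul (M : 'M[F]_2) (x y : 'rV[F]_8) : \det M = 1 ->
  omul (x *m mx2_aut M) (y *m mx2_aut M) = omul x y *m mx2_aut M.
Proof. by move=> detM; apply: qaut_omul; rewrite qnorm_mx2_quat. Qed.

End SplitQuaternions.

Section FrobeniusPower.
Variables (R : comNzRingType) (p : nat) (pcharRp : p \in [pchar R]) (k : nat).

Definition frobn of p \in [pchar R] := fun x : R => x ^+ (p ^ k).

Fact frobn_is_nmod_morphism : nmod_morphism (frobn pcharRp).
Proof.
have p_prime := pcharf_prime pcharRp.
split=> [|x y]; rewrite /frobn; first by rewrite expr0n expn_eq0 eqn0Ngt prime_gt0.
by rewrite exprDn_pchar // (eq_pnat _ (pcharf_eq pcharRp)) pnatX pnat_id.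
Qed.

Fact frobn_is_monoid_morphism : monoid_morphism (frobn pcharRp).
Proof. by split=> [|x y]; rewrite /frobn ?expr1n ?exprMn. Qed.

HB.instance Definition _ := GRing.isNmodMorphism.Build R R (frobn pcharRp)
  frobn_is_nmod_morphism.
HB.instance Definition _ := GRing.isMonoidMorphism.Build R R (frobn pcharRp)
  frobn_is_monoid_morphism.

End FrobeniusPower.

Section SL2Frobenius.
Variables (F : fieldType) (p : nat).
Hypothesis pcharFp : p \in [pchar F].

Lemma sl2_frob_trace_factor (M : 'M[F]_2) k : \det M = 1 -> \tr M ^+ (p ^ k) = \tr M ->
  (M ^+ (p ^ k).-1 - 1) * (M ^+ (p ^ k).+1 - 1) = 0.
Proof.
move=> detM trMk; set s := (p ^ k)%N.
have s_gt0 : (0 < s)%N by rewrite expn_gt0 prime_gt0 ?(pcharf_prime pcharFp).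
have pchar_polyFp : p \in [pchar {poly F}] by rewrite pchar_poly.
set P : {poly F} := 'X^2 - (\tr M)%:P * 'X + (\det M)%:P.
have PM : horner_mx M P = 0 := Cayley_Hamilton_mx22 M.
have Ps : P ^+ s = 'X^s ^+ 2 - (\tr M)%:P * 'X^s + 1.
  rewrite -[P ^+ s]/(frobn k pchar_polyFp P) /P detM rmorphD rmorphB rmorphXn rmorphM rmorph1 /=.
  by rewrite /frobn -rmorphXn /= trMk.
have -> : (M ^+ s.-1 - 1) * (M ^+ s.+1 - 1) =
    horner_mx M (('X^(s.-1) - 1) * ('X^(s.-1) * 'X^2 - 1)).
  by rewrite rmorphM !rmorphB rmorphM !rmorphXn rmorph1 /= horner_mx_X -exprD addn2 prednK.
rewrite (_ : _ * _ = P ^+ s - 'X^(s.-1) * P); last first.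
  by rewrite Ps /P detM polyC1 -(prednK s_gt0) !exprSr /=; ring.
by rewrite rmorphB rmorphM rmorphXn /= PM expr0n mulr0 subr0 eqn0Ngt s_gt0.
Qed.

Lemma sl2_frob_trace_exp1 (M : 'M[F]_2) k r : \det M = 1 -> M ^+ r = 1 -> r%:R != 0 :> F ->
  \tr M ^+ (p ^ k) = \tr M -> M ^+ (p ^ k).-1 = 1 \/ M ^+ (p ^ k).+1 = 1.
Proof.
move=> detM Mr r_neq0 trMk; have := sl2_frob_trace_factor detM trMk.
set A := _ - 1; set B := _ - 1 => AB0.
have [detA0 | detA_neq0] := eqVneq (\det A) 0.
  left; apply: (unipotent_mx22_eq1 _ detA0 _ r_neq0); first by rewrite detX detM expr1n.
  by rewrite exprAC Mr expr1n.
right; apply/eqP; rewrite -subr_eq0 -/B; apply/eqP.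
have A_unit : A \is a GRing.unit by rewrite unitmxE unitfE.
by rewrite -(mulKr A_unit B) AB0 mulr0.
Qed.

End SL2Frobenius.

(** * The group G_2(F) and the Frobenius *)

Section G2Group.
Variable F : finFieldType.
Implicit Types g h z : {perm 'rV[F]_8}.

Lemma G2P g : reflect
  ((forall a x y, g (a *: x + y) = a *: g x + g y) /\ forall x y, g (omul x y) = omul (g x) (g y))
  (g \in G2 F).
Proof.
rewrite inE; apply: (iffP andP) => [[/forallP lin_g /forallP mul_g] | [lin_g mul_g]]; split.
- by move=> a x y; apply/eqP; have /forallP/(_ x)/forallP/(_ y) := lin_g a.
- by move=> x y; apply/eqP; have /forallP/(_ y) := mul_g x.
- by apply/forallP => a; apply/forallP => x; apply/forallP => y; rewrite lin_g.
- by apply/forallP => x; apply/forallP => y; rewrite mul_g.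
Qed.

Lemma group_set_G2 : group_set (G2 F).
Proof.
apply/group_setP; split; first by apply/G2P; split=> [a x y | x y]; rewrite !perm1.
move=> g h /G2P[lin_g mul_g] /G2P[lin_h mul_h].
by apply/G2P; split=> [a x y | x y]; rewrite !permM ?lin_g ?lin_h ?mul_g ?mul_h.
Qed.

Canonical G2_group := group group_set_G2.

Lemma linear_row_mx n (phi : 'rV[F]_n -> 'rV[F]_n) :
  (forall a x y, phi (a *: x + y) = a *: phi x + phi y) -> forall v, phi v = v *m lin1_mx phi.
Proof.
move=> lin_phi v; have phi0 : phi 0 = 0.
  by have := lin_phi 1 0 0; rewrite !scale1r addr0 -{1}[phi 0]addr0 => /addrI/esym.
have phiZ a x : phi (a *: x) = a *: phi x by rewrite -[_ *: _]addr0 lin_phi phi0 addr0.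
rewrite {1}(row_sum_delta v) mulmx_sum_row.
apply: (big_ind2 (fun u w => phi u = w)) => [|u1 w1 u2 w2 <- <-|i _].
- exact: phi0.
- by rewrite -{1}[u1]scale1r lin_phi scale1r.
- by rewrite phiZ; congr (_ *: _); apply/rowP => j; rewrite !mxE.
Qed.

Lemma G2_mx g : g \in G2 F -> exists2 A : 'M[F]_8, A \in unitmx & forall v, g v = v *m A.
Proof.
move=> G2g; have /G2P[lin_g _] := G2g; have /G2P[lin_gV _] := groupVr G2g.
exists (lin1_mx g); last exact: linear_row_mx.
have [] // := @mulmx1_unit _ _ (lin1_mx g) (lin1_mx (g^-1)%g).
apply/row_matrixP => i; rewrite !rowE mulmxA.
by rewrite -(linear_row_mx lin_g) -(linear_row_mx lin_gV) permK mulmx1.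
Qed.

Lemma semilinear_norm_G2 z (sigma sigma' : F -> F) : cancel sigma' sigma ->
    (forall a x y, z (a *: x + y) = sigma a *: z x + z y) ->
    (forall x y, z (omul x y) = omul (z x) (z y)) ->
  (z \in 'N(G2 F))%g.
Proof.
move=> sigmaK lin_z mul_z; rewrite inE; apply/subsetP => _ /imsetP[g /G2P[lin_g mul_g] ->].
have zV v : v = z ((z^-1)%g v) by rewrite permKV.
apply/G2P; split=> [a x y | x y]; rewrite /conjg !permM.
  by rewrite -{1}[a]sigmaK {1}(zV x) {1}(zV y) -lin_z permK lin_g lin_z sigmaK.
by rewrite {1}(zV x) {1}(zV y) -mul_z permK mul_g mul_z.
Qed.

Section MatrixPerm.
Variables (A : 'M[F]_8) (A_unit : A \in unitmx).

Definition mx_perm : {perm 'rV[F]_8} := perm (can_inj (mulmxK A_unit)).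

Lemma mx_permE v : mx_perm v = v *m A.
Proof. by rewrite permE. Qed.

Lemma mx_permX k v : (mx_perm ^+ k)%g v = v *m A ^+ k.
Proof.
rewrite permX; elim: k => [|k IHk] /=; first by rewrite expr0 mulmx1.
by rewrite mx_permE IHk exprSr -mulmxA mulmxE.
Qed.

Lemma mx_perm_G2 : (forall x y, omul (x *m A) (y *m A) = omul x y *m A) -> mx_perm \in G2 F.
Proof. by move=> mulA; apply/G2P; split=> [a x y | x y]; rewrite !mx_permE ?mulmxDl -?scalemxAl. Qed.

End MatrixPerm.

End G2Group.

Section FrobeniusPerm.
Variables (F : finFieldType) (f : nat).
Hypothesis cardF : #|F| = (3 ^ f)%N.

Let pcharF3 : (3 \in [pchar F])%N := card_finPcharP cardF isT.

Local Notation frob k := (frobn k pcharF3).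

Lemma frobn_card a : frob f a = a.
Proof. by rewrite /frobn -cardF expf_card. Qed.

Lemma frobn_comp m k a : frob m (frob k a) = frob (k + m) a.
Proof. by rewrite /frobn -exprM -expnD. Qed.

Let frob_row_inj : injective (map_mx (frob 1) : 'rV[F]_8 -> 'rV[F]_8).
Proof. exact: map_mx_inj. Qed.

Definition frobp : {perm 'rV[F]_8} := perm frob_row_inj.

Lemma FrobSetE : FrobSet F = [set frobp].
Proof.
apply/setP => g; rewrite !inE; apply/forallP/eqP => [g_frob | -> x]; last by rewrite permE.
by apply/permP => x; rewrite permE; apply/eqP.
Qed.

Lemma frobpX k v : (frobp ^+ k)%g v = map_mx (frob k) v.
Proof.
rewrite permX; elim: k => [|k IHk] /=.
  by apply/rowP => i; rewrite mxE /frobn expn0 expr1.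
by rewrite permE IHk; apply/rowP => i; rewrite !mxE frobn_comp addn1.
Qed.

Lemma frobp_order : (frobp ^+ f = 1)%g.
Proof. by apply/permP => v; rewrite frobpX perm1; apply/rowP => i; rewrite mxE frobn_card. Qed.

Lemma frobpX_mul k v (A : 'M[F]_8) :
  (frobp ^+ k)%g (v *m A) = (frobp ^+ k)%g v *m map_mx (frob k) A.
Proof. by rewrite !frobpX map_mxM. Qed.

Lemma frobp_norm_G2 : (0 < f)%N -> (frobp \in 'N(G2 F))%g.
Proof.
move=> f_gt0; apply: (@semilinear_norm_G2 _ _ (frob 1) (frob f.-1)) => [a | a x y | x y].
- by rewrite frobn_comp addn1 prednK // frobn_card.
- by rewrite -[frobp]expg1 !frobpX map_mxD map_mxZ.
- by rewrite -[frobp]expg1 !frobpX omul_map_mx.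
Qed.

Lemma A0hat_sub_G2_frob : (0 < f)%N -> (A0hat F \subset G2 F * <[frobp]>)%g.
Proof.
move=> f_gt0; have nG2 : (<[frobp]> \subset 'N(G2 F))%g by rewrite cycle_subG frobp_norm_G2.
rewrite -(norm_joinEr nG2) /A0hat FrobSetE gen_subG subUset joing_subl sub1set.
exact: subsetP (joing_subr _ _) _ (cycle_id _).
Qed.

Lemma commute_frob_mxtrace k (g t : {perm 'rV[F]_8}) (A T : 'M[F]_8) : A \in unitmx ->
    (forall v, g v = v *m A) -> (forall v, t v = v *m T) -> commute (g * frobp ^+ k)%g t ->
  frob k (\tr T) = \tr T.
Proof.
move=> A_unit gE tE gt_comm; set Ak := map_mx (frob k) A.
have AkT : Ak *m T = map_mx (frob k) T *m Ak.
  apply/row_matrixP => i; rewrite !rowE.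
  have := congr1 (fun u : {perm _} => u (((frobp ^+ k)^-1)%g (delta_mx 0 i))) gt_comm.
  by rewrite !permM /= gE tE gE frobpX_mul tE frobpX_mul frobpX_mul permKV !mulmxA.
have Ak_unit : Ak \in unitmx by rewrite map_unitmx.
by rewrite -trace_map_mx -[map_mx _ T](mulmxK Ak_unit) -AkT mxtrace_mulC mulmxA mulVmx // mul1mx.
Qed.

End FrobeniusPerm.

(** * Zsigmondy primes *)

Lemma sqrn_sub1 m : (m ^ 2 - 1 = m.-1 * m.+1)%N.
Proof. by rewrite -subn1 -[m.+1]addn1 -subn_sqr exp1n. Qed.

Section Zsigmondy.
Variables (f r : nat).
Hypothesis zsig : zsigmondy_3_2f f r.

Lemma zsigmondy_ndvd_pred_succ k :
  (0 < k < f)%N -> ~~ ((r %| (3 ^ k).-1) || (r %| (3 ^ k).+1))%N.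
Proof.
case: zsig => r_prime [_ ord_min] /andP[k_gt0 lt_kf].
rewrite -Euclid_dvdM //; apply/negP => r_dvd.
apply: (ord_min (2 * k)%N); first by rewrite muln_gt0 k_gt0 ltn_pmul2l.
by apply/eqP; rewrite eqn_mod_dvd ?expn_gt0 // mulnC expnM sqrn_sub1.
Qed.

Lemma zsigmondy_ndvd_pred : (0 < f)%N -> ~~ (r %| (3 ^ f).-1)%N.
Proof.
case: zsig => r_prime [_ ord_min] f_gt0; apply/negP => r_dvd.
apply: (ord_min f); first by rewrite f_gt0 -{1}[f]mul1n ltn_pmul2r.
by apply/eqP; rewrite eqn_mod_dvd ?expn_gt0 // subn1.
Qed.

Lemma zsigmondy_dvd_succ : (0 < f)%N -> (r %| (3 ^ f).+1)%N.
Proof.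
move=> f_gt0; have [r_prime [r_dvd _]] := zsig.
move/eqP: r_dvd; rewrite eqn_mod_dvd ?expn_gt0 // mulnC expnM sqrn_sub1.
by rewrite Euclid_dvdM // (negbTE (zsigmondy_ndvd_pred f_gt0)).
Qed.

Lemma zsigmondy_ndvd3 : (0 < f)%N -> ~~ (3 %| r)%N.
Proof.
move=> f_gt0; apply: contraL (zsigmondy_dvd_succ f_gt0) => /dvdn_trans three_dvd.
by apply/negP => /three_dvd; rewrite -[(3 ^ f).+1]addn1 dvdn_addr ?dvdn_exp.
Qed.

End Zsigmondy.

Lemma GLvalX n (R : finComUnitRingType) (u : {'GL_n.+1[R]}) k :
  GLval (u ^+ k)%g = GLval u ^+ k.
Proof. by elim: k => [|k IHk]; rewrite ?expg0 ?expr0 // expgSr GL_ME IHk exprSr. Qed.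

Section ZsigmondyElement.
Variables (F : finFieldType) (f r : nat).
Hypotheses (cardF : #|F| = (3 ^ f)%N) (f_gt1 : (1 < f)%N) (zsig : zsigmondy_3_2f f r).

Let f_gt0 : (0 < f)%N := ltnW f_gt1.
Let pcharF3 : (3 \in [pchar F])%N := card_finPcharP cardF isT.
Let r_prime : prime r. Proof. by case: zsig. Qed.

Lemma sl2_zsigmondy_elt :
  exists2 M : 'M[F]_2, \det M = 1 & forall n, (M ^+ n == 1) = (r %| n)%N.
Proof.
have r_coprime : coprime r #|F|.-1 by rewrite prime_coprime // cardF zsigmondy_ndvd_pred.
have r_dvd_GL2 : (r %| #|'GL_2[F]%g|)%N.
  by rewrite card_GL_2 cardF dvdn_mull // zsigmondy_dvd_succ.
have [x _ ox] := Cauchy r_prime r_dvd_GL2.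
set y := (x ^+ #|F|.-1)%g.
have oy : #[y]%g = r by rewrite orderXgcd ox (eqnP r_coprime) divn1.
have GL_eq1 (u : {'GL_2[F]}) : (GLval u == 1 :> 'M[F]_2) = (u == 1)%g := val_eqE u 1%g.
exists (GLval y) => [|n]; last by rewrite -GLvalX GL_eq1 -order_dvdn oy.
rewrite GLvalX detX; apply: (mulIf (GL_det x)).
by rewrite mul1r -exprSr prednK ?expf_card // cardF expn_gt0.
Qed.

Let sqr1 : 1 ^+ 2 = - 1 - 1 ^+ 2 :> F.
Proof. by apply/eqP; rewrite -subr_eq0 -(pcharf0 pcharF3); apply/eqP; ring. Qed.

Let two_neq0 : 2%:R != 0 :> F.
Proof. by rewrite -(dvdn_pcharf pcharF3). Qed.

Section SL2Element.
Variable M : 'M[F]_2.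
Hypotheses (detM : \det M = 1) (ordM : forall n, (M ^+ n == 1) = (r %| n)%N).

Let M_unit : M \in unitmx. Proof. by rewrite unitmxE detM unitr1. Qed.
Let Mr : M ^+ r = 1. Proof. by apply/eqP; rewrite ordM. Qed.

Local Notation t := (mx_perm (mx2_aut_unitmx sqr1 two_neq0 M_unit)).

Lemma sl2_perm_G2 : t \in G2 F.
Proof. by apply: mx_perm_G2 => x y; apply: mx2_aut_omul. Qed.

Lemma sl2_perm_elt : (r.-elt t)%g.
Proof.
apply: pnat_dvd (pnat_id r_prime); rewrite order_dvdn; apply/eqP/permP => v.
by rewrite mx_permX mx2_autX // Mr mx2_aut1 // mulmx1 perm1.
Qed.

Lemma A0hat_cent_sl2_perm y : y \in A0hat F -> commute y t -> y \in G2 F.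
Proof.
move=> A0y; case/mulsgP: (subsetP (A0hat_sub_G2_frob cardF f_gt0) y A0y).
move=> g _ G2g /cycleP[i ->] ->{y A0y} yt.
rewrite -(expg_mod _ (frobp_order cardF)) in yt *; set k := (i %% f)%N in yt *.
have [-> | k_gt0] := posnP k; first by rewrite expg0 mulg1.
have [A A_unit gE] := G2_mx G2g.
have := commute_frob_mxtrace A_unit gE (mx_permE _) yt.
rewrite mxtrace_mx2_aut // rmorphD rmorphM !rmorph_nat => /addrI/(mulfI two_neq0) trMk.
have r_neq0 : r%:R != 0 :> F by rewrite -(dvdn_pcharf pcharF3) (zsigmondy_ndvd3 zsig f_gt0).
have kf : (0 < k < f)%N by rewrite k_gt0 ltn_pmod.
have := zsigmondy_ndvd_pred_succ zsig kf.
by case: (sl2_frob_trace_exp1 pcharF3 detM Mr r_neq0 trMk) => /eqP; rewrite ordM => ->; rewrite ?orbT.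
Qed.

End SL2Element.

Lemma G2_zsigmondy_elt : exists t,
  [/\ t \in G2 F, (r.-elt t)%g & forall y, y \in A0hat F -> commute y t -> y \in G2 F].
Proof.
have [M detM ordM] := sl2_zsigmondy_elt.
by eexists; split; [apply: sl2_perm_G2 | apply: sl2_perm_elt ordM | apply: A0hat_cent_sl2_perm ordM].
Qed.

End ZsigmondyElement.

Local Close Scope ring_scope.

Theorem lemma5p8 (F : finFieldType) (f : nat) (hF : #|F| = (3 ^ f)%N) (hf : (1 < f)%N)
  (phi : {perm 'rV[F]_8}) (hphi : phi \in FieldAuts F) (hphiprime : prime #[phi]%g)
  (r : nat) (hr : zsigmondy_3_2f f r)
  (R : {group {perm 'rV[F]_8}}) (hR : (R \in 'Syl_r(G2 F))%g) :
  ('C_(A0hat F)(R) \subset G2 F)%g.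
Proof.
have [t [G2t rt cent_t]] := G2_zsigmondy_elt hF hf hr.
have sylR : (r.-Sylow(G2 F) R)%g by move: hR; rewrite inE.
have G2_t : (<[t]> \subset G2 F)%g by rewrite cycle_subG.
have [h G2h tRh] := Sylow_subJ sylR G2_t rt.
have A0h : h \in A0hat F by apply: mem_gen; rewrite inE G2h.
apply/subsetP => y /setIP[A0y /centP cyR].
have cyt : commute y (t ^ h^-1) by apply: cyR; rewrite -mem_conjg (subsetP tRh) ?cycle_id.
rewrite -(groupJr y G2h) cent_t ?groupJ //.
by rewrite /commute -(conjgKV h t) -!conjMg cyt.
Qed.
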